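(* Under the setting and hypotheses of the convergence theorem stated in the context (existence of a valid solution $\boldsymbol{x}^\star$ and priors satisfying $1\ge q_v>1-\epsilon_v$ if $\mathtt{x}^\star_v=0$, $0\le q_v<\epsilon_v$ if $\mathtt{x}^\star_v=1$), the variable-to-factor messages after the first BP iteration satisfy $$\mathsf{m}^{(1)}_{v\to J}(\mathtt{x}^\star_v)>\mathsf{m}^{(1)}_{v\to J}(1-\mathtt{x}^\star_v)\quad\text{for all } v\in\mathcal{V},\ J\in\mathcal{J}_v.$$
   Context: Factor graph: a finite set $\mathcal{V}$ of binary variables $x_v\in\{0,1\}$ and a finite set $\mathcal{J}$ of factors; each factor $J$ has a nonempty neighborhood $\mathcal{V}_J\subseteq\mathcal{V}$ and a function $\mathsf{g}_J:\{0,1\}^{|\mathcal{V}_J|}\to\{0,1\}$. For $v\in\mathcal{V}$, $\mathcal{J}_v=\{J: v\in\mathcal{V}_J\}$, assumed nonempty. A valid solution is $\boldsymbol{x}^\star\in\{0,1\}^{\mathcal{V}}$ with $\mathsf{g}_J(\boldsymbol{x}^\star_{\mathcal{V}_J})=1$ for all $J$. Define $\kappa_v=\max_{J\in\mathcal{J}_v}|\{\mathbf{x}_{\mathcal{V}_J}:\mathsf{g}_J(\mathbf{x}_{\mathcal{V}_J})=1\}|$ and $\epsilon_v=1/(1+\kappa_v^{|\mathcal{J}_v|})$. BP: priors $\mathrm{P}_v(0)=q_v$, $\mathrm{P}_v(1)=1-q_v$; $\mathsf{m}^{(0)}_{v\to J}(0)=q_v$, $\mathsf{m}^{(0)}_{v\to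 J}(1)=1-q_v$; for $n\ge1$, $\mathsf{m}^{(n)}_{J\to v}(x)=\mathtt{C}^{(n)}_{J\to v}\sum_{\mathbf{x}_{\mathcal{V}_J\setminus v}}\mathsf{g}_J(\mathbf{x}_{\mathcal{V}_J\setminus v},x_v=x)\prod_{y\in\mathcal{V}_J\setminus v}\mathsf{m}^{(n-1)}_{y\to J}(x_y)$ and $\mathsf{m}^{(n)}_{v\to J}(x)=\mathtt{C}^{(n)}_{v\to J}\mathrm{P}_v(x)\prod_{I\in\mathcal{J}_v\setminus J}\mathsf{m}^{(n)}_{I\to v}(x)$, with positive normalizing constants making $\mathsf{m}(0)+\mathsf{m}(1)=1$. *)

From HB Require Import structures.
From mathcomp Require Import all_boot all_order all_algebra.
Set Implicit Arguments. Unset Strict Implicit. Unset Printing Implicit Defensive.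
Import Order.TTheory GRing.Theory Num.Theory.
Local Open Scope ring_scope.

(* Factor graph: variables V (finType), factors F (finType),
   neighbourhood N J : {set V} (= V_J), local constraint
   g J : {0,1}^{V_J} -> {0,1}, encoded as a boolean function on
   finite functions from the subtype {u | u \in N J} to bool. *)
Definition local (V F : finType) (N : F -> {set V}) (J : F) : finType :=
  {ffun {u : V | u \in N J} -> bool}.

Definition restr (V F : finType) (N : F -> {set V}) (J : F) (x : V -> bool)
  : local N J := [ffun u => x (val u)].

(* prior P_v, also the initial message m^(0)_{v->J} *)
Definition prior (R : realFieldType) (V : finType) (q : V -> R) (v : V) (b : bool) : R :=
  if b then 1 - q v else q v.

Definition normalize (R : realFieldType) (f : bool -> R) (b : bool) : R :=
  f b / (f false + f true).

Definition msgFV1 (R : realFieldType) (V F : finType) (N : F -> {set V})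
  (g : forall J : F, local N J -> bool) (q : V -> R) (J : F) (v : V) : bool -> R :=
  normalize (fun b =>
    \sum_(y : local N J | [forall u, (val u == v) ==> (y u == b)])
       ((g J y)%:R * \prod_(u : {u : V | u \in N J} | val u != v) prior q (val u) (y u))).

Definition msgVF1 (R : realFieldType) (V F : finType) (N : F -> {set V})
  (g : forall J : F, local N J -> bool) (q : V -> R) (v : V) (J : F) : bool -> R :=
  normalize (fun b =>
    prior q v b * \prod_(I : F | (v \in N I) && (I != J)) msgFV1 g q I v b).

Definition kappa (V F : finType) (N : F -> {set V})
  (g : forall J : F, local N J -> bool) (v : V) : nat :=
  \max_(J : F | v \in N J) #|[set y : local N J | g J y]|.

Definition eps (R : realFieldType) (V F : finType) (N : F -> {set V})
  (g : forall J : F, local N J -> bool) (v : V) : R :=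
  1 / (1 + (kappa g v)%:R ^+ #|[set J : F | v \in N J]|).

From HB Require Import structures.
From mathcomp Require Import all_boot all_order all_algebra.
From mathcomp Require Import ring lra.
Import Order.TTheory GRing.Theory Num.Theory.

Set Implicit Arguments.
Unset Strict Implicit.
Unset Printing Implicit Defensive.

Local Open Scope ring_scope.

(* The valid solution x* contributes a term of weight
   P := prod_{u in V_J, u <> v} prior(x*_u) to the unnormalised message
   m^(1)_{J->v}(x*_v), while each of the at most kappa_v satisfying assignments
   of J contributes at most P to the other value; hence
   m^(1)_{J->v}(1 - x*_v) <= kappa_v m^(1)_{J->v}(x*_v).  Multiplying over the
   at most |J_v| factors I != J and by the prior, whose wrong value is below
   eps_v and right value above 1 - eps_v = eps_v kappa_v^|J_v|, gives the claim. *)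

Section Normalize.

Variables (R : realFieldType) (f : bool -> R).
Hypothesis f_ge0 : forall b, 0 <= f b.

Lemma normalize_ge0 b : 0 <= normalize f b.
Proof. by rewrite /normalize divr_ge0 ?addr_ge0. Qed.

Lemma normalize_gt0 b : 0 < f b -> 0 < normalize f b.
Proof.
move=> fb_gt0; rewrite /normalize divr_gt0 //.
by case: b fb_gt0 => fb_gt0; [rewrite ltr_wpDl | rewrite ltr_wpDr].
Qed.

Lemma normalize_le_scale b c k :
  f b <= k * f c -> normalize f b <= k * normalize f c.
Proof.
by move=> le_fbc; rewrite /normalize mulrA ler_wpM2r // invr_ge0 addr_ge0.
Qed.

Lemma normalize_lt b c : f b < f c -> normalize f b < normalize f c.
Proof.
move=> lt_fbc; have fc_gt0 : 0 < f c by apply: le_lt_trans lt_fbc.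
rewrite /normalize ltr_pM2r // invr_gt0.
by case: c lt_fbc fc_gt0 => _ fc_gt0; [rewrite ltr_wpDl | rewrite ltr_wpDr].
Qed.

End Normalize.

Lemma ler_prod_scale (R : realFieldType) (I : finType) (P : pred I)
    (a b : I -> R) (k : R) :
  (forall i, P i -> 0 <= a i <= k * b i) ->
  \prod_(i | P i) a i <= k ^+ #|P| * \prod_(i | P i) b i.
Proof.
move=> le_ab; rewrite -prodr_const -big_split /=.
exact: ler_prod.
Qed.

Lemma prior_bounds (R : realFieldType) (V : finType) (q : V -> R) (e : R)
    (v : V) (x : bool) :
  e <= 1 - e ->
  (x = false -> 1 - e < q v /\ q v <= 1) ->
  (x = true -> 0 <= q v /\ q v < e) ->
  [/\ forall b, 0 <= prior q v b, prior q v (~~ x) < e & 1 - e < prior q v x].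
Proof.
rewrite /prior => e_half; case: x => [_ hx | hx _]; have [q_lo q_hi] := hx erefl.
all: by split=> /=; [case; lra | lra | lra].
Qed.

Lemma eps_mulK (R : realFieldType) (V F : finType) (N : F -> {set V})
    (g : forall J : F, local N J -> bool) (v : V) :
  eps R g v * (kappa g v)%:R ^+ #|[set J | v \in N J]| = 1 - eps R g v.
Proof.
rewrite /eps; set K := _ ^+ _.
have K_ge0 : 0 <= K by rewrite exprn_ge0.
have K1_neq0 : 1 + K != 0 by rewrite gt_eqF // ltr_wpDr.
by rewrite mul1r; field.
Qed.

Section FirstIteration.

Variables (R : realFieldType) (V F : finType) (N : F -> {set V}).
Variables (g : forall J : F, local N J -> bool) (q : V -> R) (xstar : V -> bool).
Arguments g : clear implicits.
Hypothesis hvalid : forall J : F, g J (restr N J xstar).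
Hypothesis hq0 : forall v, xstar v = false -> 1 - eps R g v < q v /\ q v <= 1.
Hypothesis hq1 : forall v, xstar v = true -> 0 <= q v /\ q v < eps R g v.

Lemma card_sat_le_kappa v I : v \in N I -> (#|[set y | g I y]| <= kappa g v)%N.
Proof. exact: (@leq_bigmax_cond F (fun I => v \in N I) (fun I => #|[set y | g I y]|)). Qed.

Lemma kappa_ge1 v I : v \in N I -> (1 <= kappa g v)%N.
Proof.
move=> vI; apply: leq_trans (card_sat_le_kappa vI).
by rewrite card_gt0; apply/set0Pn; exists (restr N I xstar); rewrite inE.
Qed.

Lemma eps_le_half v I : v \in N I -> eps R g v <= 1 - eps R g v.
Proof.
move=> vI; rewrite -eps_mulK; apply: ler_peMr; first by rewrite /eps divr_ge0 ?addr_ge0 ?exprn_ge0.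
by rewrite exprn_ege1 // ler1n (kappa_ge1 vI).
Qed.

Lemma prior_star_bounds v I : v \in N I ->
  [/\ forall b, 0 <= prior q v b, prior q v (~~ xstar v) < eps R g v
    & 1 - eps R g v < prior q v (xstar v)].
Proof. by move=> vI; exact: prior_bounds (eps_le_half vI) (@hq0 v) (@hq1 v). Qed.

Lemma prior_star_max v I b : v \in N I -> 0 <= prior q v b <= prior q v (xstar v).
Proof.
move=> vI; have [pr_ge0 pr_wrong pr_right] := prior_star_bounds vI.
have := eps_le_half vI; rewrite pr_ge0 /=.
by case: b (xstar v) pr_wrong pr_right => -[] //= *; lra.
Qed.

Definition fv_weight I v b : R :=
  \sum_(y : local N I | [forall u, (val u == v) ==> (y u == b)])
     ((g I y)%:R * \prod_(u : {u : V | u \in N I} | val u != v) prior q (val u) (y u)).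

Definition star_weight I v : R :=
  \prod_(u : {u : V | u \in N I} | val u != v) prior q (val u) (xstar (val u)).

Lemma star_weight_gt0 I v : 0 < star_weight I v.
Proof.
apply: prodr_gt0 => u _; have [_ _ pr_right] := prior_star_bounds (valP u).
by have := eps_le_half (valP u); lra.
Qed.

Lemma fv_weight_ge0 I v b : 0 <= fv_weight I v b.
Proof.
apply: sumr_ge0 => y _; rewrite mulr_ge0 ?ler0n // prodr_ge0 // => u _.
by have [] := prior_star_bounds (valP u).
Qed.

Lemma star_weight_le_fv_weight I v : star_weight I v <= fv_weight I v (xstar v).
Proof.
have star_term : [forall u, (val u == v) ==> (restr N I xstar u == xstar v)].
  by apply/forallP => u; apply/implyP => /eqP uv; rewrite ffunE uv.
rewrite /fv_weight (bigD1 _ star_term) /= hvalid mul1r ler_wpDr //.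
  apply: sumr_ge0 => y _; rewrite mulr_ge0 ?ler0n // prodr_ge0 // => u _.
  by have [] := prior_star_bounds (valP u).
by under [leRHS]eq_bigr => u _ do rewrite ffunE.
Qed.

Lemma fv_weight_le_card I v b :
  fv_weight I v b <= #|[set y | g I y]|%:R * star_weight I v.
Proof.
have P_ge0 : 0 <= star_weight I v by rewrite ltW ?star_weight_gt0.
have term_le y : (g I y)%:R * \prod_(u : {u : V | u \in N I} | val u != v)
    prior q (val u) (y u) <= (g I y)%:R * star_weight I v.
  by rewrite ler_wpM2l ?ler0n // ler_prod // => u _; exact: prior_star_max (valP u).
apply: le_trans (_ : _ <= \sum_(y : local N I) (g I y)%:R * star_weight I v) _.
  rewrite /fv_weight big_mkcond /= ler_sum // => y _.
  by case: ifP => _; rewrite ?term_le ?mulr_ge0 ?ler0n.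
rewrite -mulr_suml ler_wpM2r // -sum1_card natr_sum [leRHS]big_mkcond /=.
by rewrite ler_sum // => y _; rewrite inE; case: (g I y).
Qed.

Lemma msgFV1_ge0 I v b : 0 <= msgFV1 g q I v b.
Proof. exact/normalize_ge0/fv_weight_ge0. Qed.

Lemma msgFV1_gt0 I v : 0 < msgFV1 g q I v (xstar v).
Proof.
apply: normalize_gt0; first exact: fv_weight_ge0.
exact: lt_le_trans (star_weight_gt0 I v) (star_weight_le_fv_weight I v).
Qed.

Lemma msgFV1_le_kappa I v : v \in N I ->
  0 <= msgFV1 g q I v (~~ xstar v) <= (kappa g v)%:R * msgFV1 g q I v (xstar v).
Proof.
move=> vI; rewrite msgFV1_ge0 normalize_le_scale //; first exact: fv_weight_ge0.
apply: le_trans (fv_weight_le_card I v (~~ xstar v)) _.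
apply: ler_pM; first by rewrite ler0n.
- exact: ltW (star_weight_gt0 I v).
- by rewrite ler_nat card_sat_le_kappa.
- exact: star_weight_le_fv_weight.
Qed.

End FirstIteration.

Theorem lemma2 (R : realFieldType) (V F : finType) (N : F -> {set V})
  (g : forall J : F, local N J -> bool) (q : V -> R) (xstar : V -> bool)
  (hN : forall J : F, N J != set0)
  (hJ : forall v : V, [set J : F | v \in N J] != set0)
  (hvalid : forall J : F, g J (restr N J xstar))
  (hq0 : forall v : V, xstar v = false -> 1 - eps R g v < q v /\ q v <= 1)
  (hq1 : forall v : V, xstar v = true -> 0 <= q v /\ q v < eps R g v) :
  forall (v : V) (J : F), v \in N J ->
    msgVF1 g q v J (~~ xstar v) < msgVF1 g q v J (xstar v).
Proof.
move=> v J vJ.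
have [pr_ge0 pr_wrong pr_right] := prior_star_bounds hvalid hq0 hq1 vJ.
set others := [pred I | (v \in N I) && (I != J)].
set Pstar := \prod_(I | others I) msgFV1 g q I v (xstar v).
have Pstar_gt0 : 0 < Pstar by apply: prodr_gt0 => I _; exact: msgFV1_gt0 hvalid hq0 hq1 I v.
have others_le : (#|others| <= #|[set I | v \in N I]|)%N.
  by apply: subset_leq_card; apply/subsetP => I; rewrite !inE => /andP[].
have prod_wrong : \prod_(I | others I) msgFV1 g q I v (~~ xstar v)
    <= (kappa g v)%:R ^+ #|[set I | v \in N I]| * Pstar.
  apply: le_trans (ler_prod_scale (k := (kappa g v)%:R)
    (b := fun I => msgFV1 g q I v (xstar v)) _) _ => [I /andP[vI _]|].
    exact: msgFV1_le_kappa hvalid hq0 hq1 I v vI.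
  have kappa_ge1R : 1 <= (kappa g v)%:R :> R by rewrite ler1n (kappa_ge1 hvalid vJ).
  apply: ler_wpM2r; first exact: ltW.
  exact: ler_weXn2l kappa_ge1R _ _ others_le.
rewrite /msgVF1; apply: normalize_lt => [b|].
  by rewrite mulr_ge0 // prodr_ge0 // => I _; exact: msgFV1_ge0 hvalid hq0 hq1 I v b.
apply: le_lt_trans (ler_wpM2l (pr_ge0 _) prod_wrong) _.
rewrite mulrA ltr_pM2r //; apply: le_lt_trans pr_right.
by rewrite -eps_mulK ler_wpM2r ?exprn_ge0 // ltW.
Qed.
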